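(* Let $d\geq 1$. For each $k\geq 1$ let $\{B_{k\ell}:\ell\geq 1\}$ be a set of basis functions, and for each $j\in\{1,\ldots,d\}$ and $k\geq1$ let $\{B_{jkr}:r\geq 1\}$ be a set of basis functions. Let $g:\mathbb{R}\to[0,1]$ be non-constant and Lipschitz continuous. Then for any continuous function $f:[0,1]^d\to\mathbb{R}$ and any constant $\epsilon>0$, there exist integers $p\geq 1$, $q_k\geq 1$, $q_{jk}\geq 1$ ($1\le j\le d$, $1\le k\le p$) and real numbers $c_{k\ell}, c_{jkr}, b_k, b$ such that $$\sup_{\mathbf{x}=(x_1,\ldots,x_d)\in[0,1]^d}\left|f(\mathbf{x})-\left(\sum_{k=1}^p\sum_{\ell=1}^{q_k}c_{k\ell}B_{k\ell}\Big(g\Big(\sum_{j=1}^d\sum_{r=1}^{q_{jk}}c_{jkr}B_{jkr}(x_j)+b_k\Big)\Big)+b\right)\right|<\epsilon.$$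
   Context: A set $\{B_r:[0,1]\to\mathbb{R}\,|\,r\geq1\}$ of functions is called a set of basis functions if for every continuous $\phi:[0,1]\to\mathbb{R}$ and every $\epsilon>0$ there exist $q\geq1$ and $c_1,\ldots,c_q,c\in\mathbb{R}$ with $\sup_{x\in[0,1]}|\phi(x)-(\sum_{r=1}^q c_rB_r(x)+c)|<\epsilon$ (e.g. $\{x^r\}$, $\{\cos(r\pi x)\}$). *)

From HB Require Import structures.
From mathcomp Require Import all_boot all_order all_algebra.
From mathcomp Require Import all_classical all_reals all_analysis.
Set Implicit Arguments. Unset Strict Implicit. Unset Printing Implicit Defensive.
Import Order.TTheory GRing.Theory Num.Theory.
Import numFieldNormedType.Exports.
Local Open Scope classical_set_scope.
Local Open Scope ring_scope.

(* "sup_{x in A} |h x| < eps" written without [sup] (which is junk for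
   unbounded sets): some eps' < eps bounds |h x| uniformly on A. *)
Definition sup_lt {T : Type} {R : realType} (A : set T) (h : T -> R) (eps : R) :=
  exists2 e' : R, e' < eps & forall x, A x -> `|h x| <= e'.

Definition unit_cube {R : realType} (d : nat) : set 'rV[R]_d :=
  [set x | forall i : 'I_d, 0 <= x ord0 i <= 1].

(* {B_r : r >= 1} is a set of basis functions on [0,1]; B 0 is ignored. *)
Definition basis_functions {R : realType} (B : nat -> R -> R) : Prop :=
  forall phi : R -> R, {within `[0, 1], continuous phi} ->
  forall eps : R, 0 < eps ->
  exists q : nat, (1 <= q)%N /\
  exists (c : nat -> R) (c0 : R),
    sup_lt `[0, 1] (fun x => phi x - (\sum_(1 <= r < q.+1) c r * B r x + c0)) eps.
Arguments unit_cube {R} d.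

(* Since [g] is continuous and not constant, there are [z], [h > 0] and a
   clamped affine map [phi] with [phi (g z) = 1] and [phi (g (z - h v)) = 0]
   for [1 <= v <= d]; thus [Lam u := phi (g (z - h u))] equals 1 at 0 and
   vanishes on [[1, d]]. On a grid of mesh [1/n], [f] is approximated by the
   sum over multi-indices of iterated grid differences of [f] times products
   of one-dimensional ramps [r_j (x_j)]. Replacing each product by
   [Lam (\sum_j (1 - r_j (x_j)))] is exact when every ramp is 0 or 1, and
   since at most one ramp per coordinate is fractional, the error is at most
   [3 ^ d] times the oscillation of [f] on grid cells. Each term is then
   [phi (g (\sum_j h r_j (x_j) + (z - h d)))]; finally [phi] and the ramps
   are replaced by basis expansions, the Lipschitz continuity of [phi] and
   [g] keeping the error small. *)

From mathcomp Require Import all_boot all_order all_algebra.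
From mathcomp Require Import all_classical all_reals all_analysis.
From mathcomp Require Import ring lra zify.
Set Implicit Arguments. Unset Strict Implicit. Unset Printing Implicit Defensive.
Import Order.TTheory GRing.Theory Num.Theory.
Import numFieldNormedType.Exports.
Local Open Scope classical_set_scope.
Local Open Scope ring_scope.

Section RealFunctions.
Variable R : realType.
Implicit Types (a b t u : R) (g : R -> R).

Lemma lipschitz_constant_gt0 g : lipschitz g ->
  exists2 L : R, 0 < L & forall a b, `|g a - g b| <= L * `|a - b|.
Proof.
case=> M [_ HM]; exists (Num.max M 0 + 1).
  by rewrite ltr_pwDr // le_max lexx orbT.
move=> a b; apply: (HM _ _ (a, b)) => //.
by rewrite (@le_lt_trans _ _ (Num.max M 0)) ?ltrDl // le_max lexx.
Qed.

Lemma bounded_slope_ge0 g (K : R) :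
  (forall a b, `|g a - g b| <= K * `|a - b|) -> 0 <= K.
Proof. by move/(_ 1 0); rewrite subr0 normr1 mulr1; apply: le_trans. Qed.

Lemma bounded_slope_continuous g (K : R) :
  (forall a b, `|g a - g b| <= K * `|a - b|) -> continuous g.
Proof.
move=> gK x; have K1_gt0 : 0 < K + 1 by rewrite ltr_wpDl // (bounded_slope_ge0 gK).
apply/cvgrPdist_le => e e_gt0.
have /cvgrPdist_lt/(_ (e / (K + 1))) : t @[t --> x] --> x := cvg_id.
case=> [|r r_gt0 Hr]; first by rewrite divr_gt0.
exists r => // t /Hr xt; apply: le_trans (gK x t) _.
apply: (@le_trans _ _ ((K + 1) * `|x - t|)); first by rewrite ler_wpM2r ?lerDl.
by rewrite -ler_pdivlMl // mulrC ltW.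
Qed.

Definition clamp01 u : R := if u <= 0 then 0 else if 1 <= u then 1 else u.

Lemma clamp01_range u : 0 <= clamp01 u <= 1.
Proof. by rewrite /clamp01; do 2?case: ifP => ?; apply/andP; split; lra. Qed.

Lemma clamp01_le0 u : u <= 0 -> clamp01 u = 0.
Proof. by rewrite /clamp01 => ->. Qed.

Lemma clamp01_ge1 u : 1 <= u -> clamp01 u = 1.
Proof. by move=> u1; rewrite /clamp01 u1 ifF //; apply/negbTE; rewrite -ltNge; lra. Qed.

Lemma clamp01_dist a b : `|clamp01 a - clamp01 b| <= `|a - b|.
Proof.
wlog ab : a b / a <= b.
  by move=> W; case: (leP a b) => [/W//|/ltW /W]; rewrite distrC (distrC b).
have : 0 <= clamp01 b - clamp01 a <= b - a.
  by rewrite /clamp01; do 4?case: ifP => ?; apply/andP; split; lra.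
by case/andP=> ? ?; rewrite distrC (distrC a) !ger0_norm // subr_ge0.
Qed.

(* [z] is the first point of [[c, e]] where [G] reaches the level halfway
   between [G c] and [G e]; to its left [G] stays below that level, hence, by
   compactness, below a strictly smaller one on [[c, z - h]]. *)
Lemma continuous_first_crossing (G : R -> R) (D c e : R) : continuous G ->
  1 <= D -> c < e -> G c < G e ->
  exists z h y, [/\ 0 < h, y < G z & forall v, 1 <= v <= D -> G (z - h * v) <= y].
Proof.
move=> cG D1 ce Gce; pose m := (G c + G e) / 2.
pose S := [set t | c <= t <= e /\ m <= G t].
have Se : S e by split; [rewrite ltW // lexx | rewrite /m; lra].
have lbS : has_lbound S by exists c => t [/andP[]].
have infS : has_inf S by split; [exists e|].
set z := inf S.
have ze : z <= e by apply: ge_inf.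
have cz : c <= z by apply: lb_le_inf; [exists e | move=> t [/andP[]]].
have below : forall t, c <= t -> t < z -> G t < m.
  move=> t ct tz; rewrite ltNge; apply/negP => mGt.
  have /(ge_inf lbS) : S t by split => //; rewrite ct /= (le_trans (ltW tz) ze).
  by rewrite leNgt tz.
have mGz : m <= G z.
  rewrite leNgt; apply/negP => Gzm.
  have /cvgrPdist_lt/(_ (m - G z)) := cG z; rewrite subr_gt0 => /(_ Gzm) [r r0 Hr].
  have [t St tz] := inf_adherent r0 infS.
  have zt : z <= t by apply: ge_inf.
  case: St => _ mGt.
  have /Hr /= : `|z - t| < r by rewrite distrC ger0_norm ?subr_ge0 // ltrBlDl.
  by rewrite ltr_norml => /andP[H _]; lra.
have cz' : c < z.
  by rewrite lt_neqAle cz andbT; apply: contraTneq mGz => <-; rewrite -ltNge /m; lra.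
pose h := (z - c) / D.
have D0 : 0 < D by lra.
have h0 : 0 < h by rewrite divr_gt0 // subr_gt0.
have hD : h * D = z - c by rewrite /h mulfVK // gt_eqF.
have hh : h <= h * D by rewrite ler_peMr // ltW.
have [|y0 + Hy0] := @EVT_max R G c (z - h) _ (continuous_subspaceT cG); first lra.
rewrite in_itv /= => /andP[cy0 y0zh].
exists z, h, (G y0); split => //; first by apply: (lt_le_trans _ mGz); apply: below; lra.
move=> v /andP[v1 vD]; apply: Hy0; rewrite in_itv /=.
have : h * v <= h * D by rewrite ler_pM2l.
have : h <= h * v by rewrite ler_peMr // ltW.
lra.
Qed.

Lemma ridge_profile g (D : R) : continuous g -> 1 <= D ->
  (exists t1 t2, g t1 != g t2) ->
  exists (phi : R -> R) (K z h : R),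
  [/\ forall a b, `|phi a - phi b| <= K * `|a - b|,
      forall y, 0 <= phi y <= 1, phi (g z) = 1
    & forall v, 1 <= v <= D -> phi (g (z - h * v)) = 0].
Proof.
move=> cg D1 [t1 [t2 g12]].
have [s [s_sign [c [e [ce sgce]]]]] : exists s : R, `|s| = 1 /\
    exists c e, c < e /\ s * g c < s * g e.
  wlog lt12 : t1 t2 g12 / t1 < t2.
    move=> W; case: (ltgtP t1 t2) => [|t21|t12]; [exact: W| |].
      by apply: (W t2 t1) => //; rewrite eq_sym.
    by rewrite t12 eqxx in g12.
  move/lt_total/orP: g12 => [g12|g12].
    by exists 1; rewrite normr1; split=> //; exists t1, t2; rewrite !mul1r.
  by exists (-1); rewrite normrN1; split=> //; exists t1, t2; rewrite !mulN1r ltrN2.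
have csg : continuous (fun t => s * g t).
  by move=> t; apply: continuousM; [exact: cvg_cst | exact: cg].
have [z [h [y [h0 yz Hy]]]] := continuous_first_crossing csg D1 ce sgce.
pose D0 := s * g z - y; have D0_gt0 : 0 < D0 by rewrite subr_gt0.
exists (fun t => clamp01 ((s * t - y) / D0)), D0^-1, z, h; split.
- move=> a b; apply: le_trans (clamp01_dist _ _) _.
  rewrite -mulrBl opprB addrA subrK -mulrBr mulrC !normrM s_sign mul1r.
  by rewrite normfV (gtr0_norm D0_gt0).
- by move=> ?; exact: clamp01_range.
- by rewrite clamp01_ge1 // mulfV ?gt_eqF.
- move=> v vD; rewrite clamp01_le0 // mulr_le0_ge0 ?invr_ge0 ?(ltW D0_gt0) //.
  by rewrite subr_le0 Hy.
Qed.

End RealFunctions.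

Lemma nat_cell {R : realType} (N : nat) (s : R) : (0 < N)%N -> 0 <= s <= N%:R ->
  exists2 M : nat, (M < N)%N & M%:R <= s <= M.+1%:R.
Proof.
elim: N => // -[|N] IH _ s0N; first by exists 0%N => //; rewrite mulr0n.
have [sN|sN] := leP s N.+1%:R; last by exists N.+1 => //; apply/andP; split; lra.
by have [|M MN sM] := IH isT; [lra | exists M => //; lia].
Qed.

Section Staircase.
Variables (R : realType) (n : nat).
Implicit Types (t u w : R) (y : nat -> R) (F : (nat -> R) -> R).

(* On [[0, 1]], [F 0 + \sum_(1 <= i <= n) ramp i t * (F (i/n) - F ((i-1)/n))]
   is the piecewise linear interpolant of [F]; [ramp 0 = 1] carries [F 0]. *)
Definition ramp (i : nat) t : R :=
  if i == 0%N then 1 else clamp01 (n%:R * t - i.-1%:R).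

Lemma ramp_range i t : 0 <= ramp i t <= 1.
Proof. by rewrite /ramp; case: ifP => _; [lra | exact: clamp01_range]. Qed.

Lemma ramp_dist i s t : `|ramp i s - ramp i t| <= n%:R * `|s - t|.
Proof.
rewrite /ramp; case: ifP => _; first by rewrite subrr normr0 mulr_ge0.
apply: le_trans (clamp01_dist _ _) _.
by rewrite opprB addrA subrK -mulrBr normrM ger0_norm.
Qed.

Definition set_coord y (j : nat) (v : R) : nat -> R :=
  fun k => if k == j then v else y k.

Definition grid_diff F (j i : nat) : (nat -> R) -> R := fun y =>
  if i == 0%N then F (set_coord y j 0)
  else F (set_coord y j (i%:R / n%:R)) - F (set_coord y j (i.-1%:R / n%:R)).

Lemma grid_diff_telescope F j M y :
  \sum_(0 <= i < M.+1) grid_diff F j i y = F (set_coord y j (M%:R / n%:R)).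
Proof.
elim: M => [|M IH]; first by rewrite big_nat1 /grid_diff /= mul0r.
by rewrite big_nat_recr //= IH /grid_diff /=; lra.
Qed.

(* A multi-index is stored in reverse: the head of [l] is the grid index of
   coordinate [size l - 1]. *)
Fixpoint grid_indices (m : nat) : seq (seq nat) :=
  if m is m'.+1 then [seq i :: l | i <- iota 0 n.+1, l <- grid_indices m']
  else [:: [::]].

Fixpoint ramp_defect (l : seq nat) y : R :=
  if l is i :: l' then (1 - ramp i (y (size l'))) + ramp_defect l' y else 0.

Fixpoint grid_diffs (l : seq nat) F : (nat -> R) -> R :=
  if l is i :: l' then grid_diffs l' (grid_diff F (size l') i) else F.

Lemma size_grid_index m l : l \in grid_indices m -> size l = m.
Proof.
elim: m l => [|m IH] l; first by rewrite inE => /eqP ->.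
by case/allpairsP => -[i l'] [_ /IH /= <- ->].
Qed.

Lemma size_grid_indices m : size (grid_indices m) = (n.+1 ^ m)%N.
Proof.
elim: m => // m IH.
by rewrite /grid_indices -/grid_indices size_allpairs size_iota IH expnS.
Qed.

Lemma grid_diffs_local l (Q : nat -> Prop) F :
    (forall y z, (forall j, Q j -> y j = z j) -> F y = F z) ->
  forall y z, (forall j, Q j -> (size l <= j)%N -> y j = z j) ->
  grid_diffs l F y = grid_diffs l F z.
Proof.
elim: l Q F => [|i l IH] Q F HF y z yz /=; first by apply: HF => j Qj; apply: yz.
apply: (IH (fun j => Q j /\ j <> size l)); last by move=> j [Qj jl] lj; apply: yz => //=; lia.
move=> y' z' yz'; rewrite /grid_diff /set_coord.
by case: ifP => _; [|congr (_ - _)]; apply: HF => j Qj; case: eqP => // jl; apply: yz'.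
Qed.

Lemma ramp_defectE l y :
  ramp_defect l y = \sum_(j < size l) (1 - ramp (nth 0%N l (size l - j.+1)) (y j)).
Proof.
elim: l => [|i l IH] /=; first by rewrite big_ord0.
rewrite big_ord_recr /= subnn /= addrC IH; congr (_ + _).
by apply: eq_bigr => j _; rewrite subSS -(subnSK (ltn_ord j)).
Qed.

Section Interpolation.
Variable Lam : R -> R.
Hypothesis Lam_ge1 : forall u, 1 <= u -> Lam u = 0.
Hypothesis Lam_bound : forall u, `|Lam u| <= 1.

(* [u] accumulates the defects [1 - ramp] of the coordinates interpolated so
   far, and [Lam] turns their sum into an approximate product of the ramps. *)
Fixpoint staircase (m : nat) u F y : R :=
  if m is m'.+1 then
    \sum_(i < n.+1) staircase m' (u + 1 - ramp i (y m')) (grid_diff F m' i) y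
  else Lam u * F y.

Lemma staircase_ge1 m u F y : 1 <= u -> staircase m u F y = 0.
Proof.
elim: m u F => [|m IH] u F u1 /=; first by rewrite Lam_ge1 ?mul0r.
by apply: big1 => i _; apply: IH; have := ramp_range i (y m); lra.
Qed.

Lemma staircase_sum m u (r : seq nat) (G : nat -> (nat -> R) -> R) y :
  staircase m u (fun z => \sum_(k <- r) G k z) y = \sum_(k <- r) staircase m u (G k) y.
Proof.
elim: m u G => [|m IH] u G /=; first by rewrite mulr_sumr.
rewrite exchange_big /=; apply: eq_bigr => i _; rewrite -IH.
by congr staircase; apply: funext => z; rewrite /grid_diff; case: ifP; rewrite ?sumrB.
Qed.

Lemma staircaseE m u F y :
  staircase m u F y = \sum_(l <- grid_indices m) Lam (u + ramp_defect l y) * grid_diffs l F y.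
Proof.
elim: m u F => [|m IH] u F; first by rewrite /= big_seq1 addr0.
rewrite [staircase _.+1 _ _ _]/= /grid_indices -/grid_indices big_allpairs_dep.
rewrite -(big_mkord xpredT (fun i => staircase m (u + 1 - ramp i (y m)) (grid_diff F m i) y)).
apply: eq_bigr => i _; rewrite IH big_seq [RHS]big_seq; apply: eq_bigr => l lm.
by rewrite /= (size_grid_index lm); congr (Lam _ * _); ring.
Qed.

Hypothesis n_gt0 : (0 < n)%N.

Lemma n_inv_gt0 : 0 < n%:R^-1 :> R.
Proof. by rewrite invr_gt0 ltr0n. Qed.

Lemma ramp_eq1 i M t : (i <= M)%N -> M%:R / n%:R <= t -> ramp i t = 1.
Proof.
move=> iM; rewrite ler_pdivrMr ?ltr0n // => Mt.
rewrite /ramp; case: ifP => // /negbT i0; apply: clamp01_ge1.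
have : (i.-1.+1%:R <= M%:R :> R) by rewrite ler_nat; lia.
rewrite -natr1; lra.
Qed.

Lemma ramp_eq0 i M t : (M.+1 < i)%N -> t <= M.+1%:R / n%:R -> ramp i t = 0.
Proof.
move=> Mi; rewrite ler_pdivlMr ?ltr0n // => tM.
rewrite /ramp ifF; last by apply/negbTE; lia.
apply: clamp01_le0; have : M.+1%:R <= i.-1%:R :> R by rewrite ler_nat; lia.
lra.
Qed.

Lemma grid_cell t : 0 <= t <= 1 ->
  exists2 M : nat, (M < n)%N & M%:R / n%:R <= t <= M.+1%:R / n%:R.
Proof.
move=> t01; have n_pos : 0 < n%:R :> R by rewrite ltr0n.
have [|M Mn] := @nat_cell R n (n%:R * t) n_gt0; first by nra.
by exists M; rewrite // !ler_pdivrMr ?ler_pdivlMr // ![t * _]mulrC.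
Qed.

Lemma staircase_cell m u F y M : 0 <= u -> (M < n)%N ->
    M%:R / n%:R <= y m <= M.+1%:R / n%:R ->
  staircase m.+1 u F y =
    staircase m u (fun z => F (set_coord z m (M%:R / n%:R))) y
  + staircase m (u + 1 - ramp M.+1 (y m)) (grid_diff F m M.+1) y.
Proof.
move=> u0 Mn /andP[lo hi] /=.
rewrite -(big_mkord xpredT (fun i => staircase m (u + 1 - ramp i (y m)) (grid_diff F m i) y)).
rewrite (big_cat_nat _ (n := M.+1)) //=; last by lia.
rewrite [\sum_(M.+1 <= i < n.+1) _]big_ltn; last by lia.
have -> : \sum_(M.+2 <= i < n.+1) staircase m (u + 1 - ramp i (y m)) (grid_diff F m i) y = 0.
  rewrite big_nat_cond big1 // => i /andP[/andP[Mi _] _]; apply: staircase_ge1.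
  by rewrite (ramp_eq0 Mi hi) subr0 lerDr.
rewrite addr0; congr (_ + _).
rewrite (_ : (fun z => _) = fun z => \sum_(0 <= i < M.+1) grid_diff F m i z); last first.
  by apply: funext => z; rewrite grid_diff_telescope.
rewrite staircase_sum big_nat_cond [RHS]big_nat_cond.
by apply: eq_bigr => i /andP[/andP[_ iM] _]; rewrite (ramp_eq1 (ltnSE iM) lo) addrK.
Qed.

Variable d : nat.

Definition in_cube y := forall j, (j < d)%N -> 0 <= y j <= 1.

Definition mesh_osc F w := forall y z, in_cube y -> in_cube z ->
  (forall j, `|y j - z j| <= n%:R^-1) -> `|F y - F z| <= w.

Lemma in_cube_set_coord y j v : in_cube y -> 0 <= v <= 1 -> in_cube (set_coord y j v).
Proof. by move=> cy v01 k kd; rewrite /set_coord; case: ifP => _; [|apply: cy]. Qed.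

Lemma grid_point_range i : (i <= n)%N -> 0 <= (i%:R / n%:R : R) <= 1.
Proof.
move=> ilen; rewrite divr_ge0 //= ler_pdivrMr ?ltr0n //.
by rewrite mul1r ler_nat.
Qed.

Lemma mesh_osc_ge0 F w y : mesh_osc F w -> in_cube y -> 0 <= w.
Proof.
move=> oF cy; apply: le_trans (oF y y cy cy _) => // j.
by rewrite subrr normr0 ltW ?n_inv_gt0.
Qed.

Lemma mesh_osc_set_coord F w j v : mesh_osc F w -> 0 <= v <= 1 ->
  mesh_osc (fun y => F (set_coord y j v)) w.
Proof.
move=> oF v01 y z cy cz yz; apply: oF; try exact: in_cube_set_coord.
by move=> k; rewrite /set_coord; case: ifP => _ //; rewrite subrr normr0 ltW ?n_inv_gt0.
Qed.

Lemma mesh_osc_grid_diff F w j i : mesh_osc F w -> (i <= n)%N ->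
  mesh_osc (grid_diff F j i) (2 * w).
Proof.
move=> oF ilen y z cy cz yz; have w0 := mesh_osc_ge0 oF cy.
rewrite /grid_diff; case: ifP => _.
  by have := mesh_osc_set_coord j oF (grid_point_range (leq0n n)) cy cz yz; rewrite mul0r; lra.
have := mesh_osc_set_coord j oF (grid_point_range ilen) cy cz yz.
have := mesh_osc_set_coord j oF (grid_point_range (leq_trans (leq_pred i) ilen)) cy cz yz.
set a := F _; set b := F _; set c := F _; set e := F _ => ac be.
have -> : c - a - (e - b) = (c - e) - (a - b) by ring.
by apply: le_trans (ler_normB _ _) _; lra.
Qed.

(* In the cell of [y m], [staircase_cell] leaves one exact interpolation
   term and one increment of size at most [w] whose oscillation is at most
   [2 w]: (3^m - 1) w + w + (3^m - 1) 2 w + w = (3^(m+1) - 1) w. *)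
Lemma staircase_error m u F w y : (m <= d)%N -> 0 <= u -> mesh_osc F w ->
  in_cube y -> `|staircase m u F y - Lam u * F y| <= ((3 ^ m)%:R - 1) * w.
Proof.
elim: m u F w => [|m IH] u F w md u0 oF cy.
  by rewrite /= subrr normr0 expn0 subrr mul0r.
have w0 := mesh_osc_ge0 oF cy.
have [M Mn /andP[lo hi]] := grid_cell (cy m md).
rewrite (staircase_cell F u0 Mn); last by rewrite lo hi.
set F' := fun z => F (set_coord z m (M%:R / n%:R)).
set u' := u + 1 - ramp M.+1 (y m).
have u'0 : 0 <= u' by have := ramp_range M.+1 (y m); rewrite /u'; lra.
have gM := grid_point_range Mn; have gM' := grid_point_range (ltnW Mn).
have e1 : M.+1%:R / n%:R = M%:R / n%:R + n%:R^-1 :> R by rewrite -natr1 mulrDl mul1r.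
have h1 := IH u F' w (ltnW md) u0 (mesh_osc_set_coord m oF gM') cy.
have h2 := IH u' _ _ (ltnW md) u'0 (mesh_osc_grid_diff m oF Mn) cy.
have h3 : `|F' y - F y| <= w.
  apply: oF => //; first exact: in_cube_set_coord.
  move=> j; rewrite /set_coord; case: ifP => [/eqP ->|_].
    by rewrite ler_norml; apply/andP; split; lra.
  by rewrite subrr normr0 ltW ?n_inv_gt0.
have h4 : `|grid_diff F m M.+1 y| <= w.
  apply: oF; try exact: in_cube_set_coord.
  move=> j; rewrite /set_coord; case: ifP => _; last by rewrite subrr normr0 ltW ?n_inv_gt0.
  by rewrite e1 addrC addKr ger0_norm // ltW ?n_inv_gt0.
set P1 := staircase m u F' y in h1 *; set P2 := staircase m u' _ y in h2 *.
have -> : P1 + P2 - Lam u * F y = (P1 - Lam u * F' y) + Lam u * (F' y - F y)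
    + (P2 - Lam u' * grid_diff F m M.+1 y) + Lam u' * grid_diff F m M.+1 y by ring.
set X := P1 - _; set Y := Lam u * _; set Z := P2 - _; set W := Lam u' * _.
have := ler_normD (X + Y + Z) W; have := ler_normD (X + Y) Z; have := ler_normD X Y.
rewrite /Y /W !normrM.
have := Lam_bound u; have := Lam_bound u'; have := normr_ge0 (F' y - F y).
have := normr_ge0 (grid_diff F m M.+1 y); have := normr_ge0 (Lam u); have := normr_ge0 (Lam u').
have : 1 <= (3 ^ m)%:R :> R by rewrite ler1n expn_gt0.
rewrite expnS natrM; nra.
Qed.

End Interpolation.
End Staircase.

Section UnitCube.
Variables (R : realType) (d : nat).

Lemma unit_cube_compact : compact (unit_cube d : set 'rV[R]_d).
Proof.
rewrite (_ : unit_cube d = [set v | forall i, `[0, 1]%classic (v ord0 i)]).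
  exact: rV_compact (fun=> @segment_compact R 0 1).
by apply/seteqP; split => v /= v01 i; have := v01 i; rewrite /= in_itv.
Qed.

Lemma unit_cube_unif_continuous (f : 'rV[R]_d -> R) e :
  {within unit_cube d, continuous f} -> 0 < e ->
  exists2 del, 0 < del & forall x y, unit_cube d x -> unit_cube d y ->
    (forall i, `|x ord0 i - y ord0 i| < del) -> `|f x - f y| <= e.
Proof.
rewrite continuous_subspace_in => cf e_gt0.
have := unit_cube_compact; rewrite compact_near_coveringP => /(_ R (0^'+)
  (fun del x => unit_cube d x -> forall y, unit_cube d y ->
   (forall i, `|x ord0 i - y ord0 i| < del) -> `|f x - f y| <= e)) [x cx|eta /= eta_gt0 Heta].
  have := cf x; rewrite inE => /(_ cx) /cvgrPdist_lt /(_ (e / 2)).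
  rewrite divr_gt0 // => /(_ isT).
  case/(nbhs_subspace_ex _ cx) => [V /nbhs_ballP [r /= r_gt0 rV] VE].
  have near_x t : ball x r t -> unit_cube d t -> `|f x - f t| < e / 2.
    move=> xt ct; have : (V `&` unit_cube d) t by split => //; apply: rV.
    by rewrite -VE => -[].
  exists (ball x (r / 2), [set del | 0 < del /\ del < r / 2]).
    split; first by apply: nbhsx_ballx; rewrite divr_gt0.
    exists (r / 2); first by rewrite /= divr_gt0.
    by move=> t /=; rewrite sub0r normrN => + t_gt0; rewrite gtr0_norm.
  case=> x' del /= [xx' [del_gt0 del_lt]] cx' y cy x'y.
  have bxx' : ball x r x' by apply: le_ball xx'; lra.
  have bxy : ball x r y.
    move: xx'; rewrite /ball /= => -[_ xx']; split => // i j.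
    rewrite (ord1 i); have := xx' ord0 j; have := x'y j; rewrite /ball /=.
    by have := ler_distD (x' ord0 j) (x ord0 j) (y ord0 j); lra.
  have := near_x _ bxx' cx'; have := near_x _ bxy cy.
  by have := ler_distD (f x) (f x') (f y); rewrite [`|f x' - f x|]distrC; lra.
exists (eta / 2); first by rewrite divr_gt0.
move=> x y cx cy xy; apply: (Heta (eta / 2)) => //=; last by rewrite divr_gt0.
by rewrite sub0r normrN gtr0_norm ?divr_gt0 //; lra.
Qed.

Lemma unit_cube_mesh_osc (f : 'rV[R]_d -> R) e :
  {within unit_cube d, continuous f} -> 0 < e ->
  exists2 n : nat, (0 < n)%N & forall x y, unit_cube d x -> unit_cube d y ->
    (forall i, `|x ord0 i - y ord0 i| <= n%:R^-1) -> `|f x - f y| <= e.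
Proof.
move=> cf e_gt0; have [del del_gt0 f_unif] := unit_cube_unif_continuous cf e_gt0.
exists (Num.truncn del^-1).+1 => // x y cx cy xy; apply: f_unif => // i.
apply: le_lt_trans (xy i) _.
by rewrite -ltf_pV2 ?posrE ?invr_gt0 ?ltr0n // invrK truncnS_gt.
Qed.

Lemma staircase_ridge_approx (n : nat) (Lam : R -> R) (f : 'rV[R]_d -> R) (w : R) :
    (0 < n)%N -> Lam 0 = 1 -> (forall u, 1 <= u -> Lam u = 0) ->
    (forall u, `|Lam u| <= 1) ->
    (forall x y, unit_cube d x -> unit_cube d y ->
      (forall i, `|x ord0 i - y ord0 i| <= n%:R^-1) -> `|f x - f y| <= w) ->
  exists p : nat, (0 < p)%N /\ exists (a : nat -> R) (idx : nat -> 'I_d -> nat),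
    forall x, unit_cube d x ->
    `|f x - \sum_(1 <= k < p.+1)
              a k * Lam (\sum_(j < d) (1 - ramp n (idx k j) (x ord0 j)))|
      <= ((3 ^ d)%:R - 1) * w.
Proof.
move=> n_gt0 Lam0 Lam_ge1 Lam_bound osc_f.
pose F (y : nat -> R) := f (\row_(i < d) y i).
have oF : mesh_osc n d F w.
  by move=> y z cy cz yz; apply: osc_f => i; rewrite ?mxE; [apply: cy | apply: cz | ].
pose L k := nth [::] (grid_indices n d) k.-1.
exists (size (grid_indices n d)); split; first by rewrite size_grid_indices expn_gt0.
exists (fun k => grid_diffs n (L k) F (fun=> 0)), (fun k j => nth 0%N (L k) (d - j.+1)).
move=> x cx.
pose y j := if insub j is Some i then x ord0 (i : 'I_d) else 0.
have yE (i : 'I_d) : y i = x ord0 i by rewrite /y valK.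
have Fy : F y = f x by congr f; apply/rowP => i; rewrite mxE yE.
have cy : in_cube d y.
  by move=> j jd; rewrite /y; case: insubP => [i _ _|]; [exact: cx | rewrite jd].
have := staircase_error Lam_ge1 Lam_bound n_gt0 (leqnn d) (lexx 0) oF cy.
rewrite Lam0 mul1r Fy staircaseE distrC (big_nth [::]) big_add1 /=.
congr (`|_ - _| <= _); apply: eq_big_nat => k /andP[_ kp].
have Lk : L k.+1 \in grid_indices n d by apply: mem_nth.
rewrite add0r ramp_defectE (size_grid_index Lk) mulrC; congr (_ * Lam _).
  apply: (@grid_diffs_local _ _ _ (fun j => (j < d)%N)) => [z z' zz'|j jd].
    by congr f; apply/rowP => i; rewrite !mxE zz'.
  by rewrite (size_grid_index Lk) => dj; lia.
by apply: eq_bigr => j _; rewrite yE.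
Qed.

End UnitCube.

Lemma continuous_ridge_approx (R : realType) (d : nat) (g : R -> R)
    (f : 'rV[R]_d -> R) (eps : R) :
    (0 < d)%N -> continuous g -> (exists t1 t2, g t1 != g t2) ->
    {within unit_cube d, continuous f} -> 0 < eps ->
  exists (phi : R -> R) (K : R), (forall a b, `|phi a - phi b| <= K * `|a - b|) /\
  exists p : nat, (0 < p)%N /\
  exists (a : nat -> R) (psi : nat -> 'I_d -> R -> R) (beta : R),
    (forall k j, continuous (psi k j)) /\
    forall x, unit_cube d x ->
    `|f x - \sum_(1 <= k < p.+1) a k * phi (g (\sum_(j < d) psi k j (x ord0 j) + beta))|
      <= eps.
Proof.
move=> d_gt0 cg g_nonconst cf eps_gt0.
have [|phi [K [z [h [phiK phi01 phi_z phi_gap]]]]] := ridge_profile (D := d%:R) cg _ g_nonconst.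
  by rewrite ler1n.
pose Lam u := if u <= d%:R then phi (g (z - h * u)) else 0.
have Lam0 : Lam 0 = 1 by rewrite /Lam ler0n mulr0 subr0.
have Lam_ge1 u : 1 <= u -> Lam u = 0.
  by rewrite /Lam; case: ifP => // ud u1; apply: phi_gap; rewrite u1 ud.
have Lam_bound u : `|Lam u| <= 1.
  rewrite /Lam; case: ifP => _; last by rewrite normr0.
  by have /andP[? ?] := phi01 (g (z - h * u)); rewrite ger0_norm.
have three_gt0 : 0 < (3 ^ d)%:R :> R by rewrite ltr0n expn_gt0.
have [n n_gt0 f_osc] := unit_cube_mesh_osc cf (divr_gt0 eps_gt0 three_gt0).
have [p [p_gt0 [a [idx f_approx]]]] :=
  staircase_ridge_approx n_gt0 Lam0 Lam_ge1 Lam_bound f_osc.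
exists phi, K; split => //; exists p; split => //.
exists a, (fun k j t => h * ramp n (idx k j) t), (z - h * d%:R); split.
  move=> k j; apply: (@bounded_slope_continuous _ _ (`|h| * n%:R)) => s t.
  by rewrite -mulrBr normrM -mulrA ler_wpM2l // ramp_dist.
move=> x cx.
have Lam_ridge k : Lam (\sum_(j < d) (1 - ramp n (idx k j) (x ord0 j))) =
    phi (g (\sum_(j < d) h * ramp n (idx k j) (x ord0 j) + (z - h * d%:R))).
  set S := \sum_(j < d) _.
  have S_range : 0 <= S <= d%:R.
    rewrite sumr_ge0 /= => [|j _]; last by have := ramp_range n (idx k j) (x ord0 j); lra.
    rewrite -[d in d%:R]card_ord -sumr_const ler_sum // => j _.
    by have := ramp_range n (idx k j) (x ord0 j); lra.
  rewrite /Lam ifT; last by case/andP: S_range.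
  by rewrite /S sumrB sumr_const card_ord -mulr_sumr; congr (phi (g _)); rewrite mulrBr; ring.
have := f_approx x cx; under eq_bigr do rewrite Lam_ridge.
move/le_trans; apply.
by rewrite mulrBl mul1r mulrC mulfVK ?gt_eqF // gerBl divr_ge0 ?ltW.
Qed.

Lemma basis_approx_family (R : realType) (I : Type) (P : I -> Prop)
    (B : I -> nat -> R -> R) (phi : I -> R -> R) (del : R) :
    (forall i, P i -> basis_functions (B i)) ->
    (forall i, P i -> {within `[0, 1], continuous (phi i)}) -> 0 < del ->
  exists (q : I -> nat) (c : I -> nat -> R) (c0 : I -> R), forall i, P i ->
    (0 < q i)%N /\ forall t, 0 <= t <= 1 ->
    `|phi i t - (\sum_(1 <= r < (q i).+1) c i r * B i r t + c0 i)| < del.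
Proof.
move=> hB cphi del_gt0.
have /choice[qc Hqc] : forall i, exists qc : nat * (nat -> R) * R, P i ->
    (0 < qc.1.1)%N /\ forall t, 0 <= t <= 1 ->
    `|phi i t - (\sum_(1 <= r < qc.1.1.+1) qc.1.2 r * B i r t + qc.2)| < del.
  move=> i; have [Pi|nPi] := pselect (P i); last by exists (1%N, fun=> 0, 0) => /nPi.
  have [q [q_gt0 [c [c0 [e e_del He]]]]] := hB i Pi (phi i) (cphi i Pi) del del_gt0.
  exists (q, c, c0) => _; split => // t t01; apply: le_lt_trans (He t _) e_del.
  by rewrite /= in_itv.
by exists (fun i => (qc i).1.1), (fun i => (qc i).1.2), (fun i => (qc i).2).
Qed.

Lemma ridge_term_perturb (R : realType) (g phi Phi : R -> R) (Lg K del u v : R) :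
    (forall t, 0 <= g t <= 1) -> (forall s t, `|g s - g t| <= Lg * `|s - t|) ->
    (forall s t, `|phi s - phi t| <= K * `|s - t|) ->
    (forall t, 0 <= t <= 1 -> `|phi t - Phi t| < del) ->
  `|phi (g u) - Phi (g v)| <= K * Lg * `|u - v| + del.
Proof.
move=> g01 gLg phiK phiPhi; have K_ge0 := bounded_slope_ge0 phiK.
have phi_uv : `|phi (g u) - phi (g v)| <= K * Lg * `|u - v|.
  by apply: le_trans (phiK _ _) _; rewrite -mulrA ler_wpM2l.
have := phiPhi _ (g01 v); have := ler_distD (phi (g v)) (phi (g u)) (Phi (g v)); lra.
Qed.

Lemma basis_ridge_approx (R : realType) (d p : nat) (B1 : nat -> nat -> R -> R)
    (B2 : 'I_d -> nat -> nat -> R -> R) (g phi : R -> R) (Lg K : R)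
    (a : nat -> R) (psi : nat -> 'I_d -> R -> R) (beta eps : R) :
    (forall k, (0 < k)%N -> basis_functions (B1 k)) ->
    (forall j k, (0 < k)%N -> basis_functions (B2 j k)) ->
    (forall t, 0 <= g t <= 1) -> (forall s t, `|g s - g t| <= Lg * `|s - t|) ->
    (forall s t, `|phi s - phi t| <= K * `|s - t|) ->
    (forall k j, continuous (psi k j)) -> 0 < eps ->
  exists (q1 : nat -> nat) (q2 : 'I_d -> nat -> nat),
    (forall k, (0 < k)%N -> (0 < q1 k)%N) /\
    (forall j k, (0 < k)%N -> (0 < q2 j k)%N) /\
  exists (c1 : nat -> nat -> R) (c2 : 'I_d -> nat -> nat -> R) (bk : nat -> R) (b : R),
  forall x, unit_cube d x ->
    `|\sum_(1 <= k < p.+1) a k * phi (g (\sum_(j < d) psi k j (x ord0 j) + beta))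
      - (\sum_(1 <= k < p.+1) \sum_(1 <= l < (q1 k).+1)
           c1 k l * B1 k l (g (\sum_(j < d) \sum_(1 <= r < (q2 j k).+1)
                                  c2 j k r * B2 j k r (x ord0 j) + bk k))
         + b)| <= eps.
Proof.
move=> hB1 hB2 g01 gLg phiK cpsi eps_gt0.
have K_ge0 := bounded_slope_ge0 phiK; have Lg_ge0 := bounded_slope_ge0 gLg.
pose T := \sum_(1 <= k < p.+1) `|a k|.
have T_ge0 : 0 <= T by apply: sumr_ge0.
pose C := 1 + K * Lg * d%:R.
have C_gt0 : 0 < C by rewrite ltr_pwDl // !mulr_ge0.
pose del := eps / ((1 + T) * C).
have del_gt0 : 0 < del by rewrite divr_gt0 // mulr_gt0 // ltr_pwDl.
have [q1 [c1 [b1 Hphi]]] := basis_approx_family (phi := fun=> phi) hB1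
  (fun _ _ => continuous_subspaceT (bounded_slope_continuous phiK)) del_gt0.
have [q2 [c2 [b2 Hpsi]]] := basis_approx_family (I := 'I_d * nat)
  (P := fun jk => (0 < jk.2)%N) (B := fun jk => B2 jk.1 jk.2) (phi := fun jk => psi jk.2 jk.1)
  (fun jk => hB2 jk.1 jk.2) (fun jk _ => continuous_subspaceT (cpsi _ _)) del_gt0.
exists q1, (fun j k => q2 (j, k)); split; first by move=> k /Hphi[].
split; first by move=> j k /(Hpsi (j, k))[].
exists (fun k l => a k * c1 k l), (fun j k r => c2 (j, k) r),
  (fun k => beta + \sum_(j < d) b2 (j, k)), (\sum_(1 <= k < p.+1) a k * b1 k).
move=> x cx.
pose u k := \sum_(j < d) psi k j (x ord0 j) + beta.
pose v k := \sum_(j < d) \sum_(1 <= r < (q2 (j, k)).+1) c2 (j, k) r * B2 j k r (x ord0 j)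
  + (beta + \sum_(j < d) b2 (j, k)).
pose Phi k t := \sum_(1 <= l < (q1 k).+1) c1 k l * B1 k l t + b1 k.
rewrite [X in _ - X](_ : _ = \sum_(1 <= k < p.+1) a k * Phi k (g (v k))); last first.
  rewrite -big_split; apply: eq_bigr => k _; rewrite /Phi mulrDr mulr_sumr.
  by congr (_ + _); apply: eq_bigr => l _; rewrite mulrA.
have uv k : (0 < k)%N -> `|u k - v k| <= d%:R * del.
  move=> k_gt0; rewrite (_ : u k - v k = \sum_(j < d) (psi k j (x ord0 j) -
      (\sum_(1 <= r < (q2 (j, k)).+1) c2 (j, k) r * B2 j k r (x ord0 j) + b2 (j, k)))); last first.
    by rewrite /u /v sumrB big_split /=; ring.
  apply: le_trans (ler_norm_sum _ _ _) _.
  have -> : d%:R * del = \sum_(j < d) del by rewrite sumr_const card_ord mulr_natl.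
  apply: ler_sum => j _.
  by apply/ltW/(Hpsi (j, k) k_gt0).2/cx.
have term k : (0 < k)%N -> `|phi (g (u k)) - Phi k (g (v k))| <= C * del.
  move=> k_gt0; apply: le_trans (ridge_term_perturb _ _ g01 gLg phiK (Hphi k k_gt0).2) _.
  by rewrite /C mulrDl mul1r [del + _]addrC lerD2r -!mulrA !ler_wpM2l // uv.
rewrite -sumrB; apply: le_trans (ler_norm_sum _ _ _) _.
apply: (@le_trans _ _ (\sum_(1 <= k < p.+1) `|a k| * (C * del))).
  by apply: ler_sum_nat => k /andP[k_gt0 _]; rewrite -mulrBr normrM ler_wpM2l ?term.
rewrite -mulr_suml -/T /del.
have -> : T * (C * (eps / ((1 + T) * C))) = eps * (T / (1 + T)).
  by field; rewrite !gt_eqF // ltr_pwDl.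
by rewrite ler_piMr ?divr_ge0 ?(ltW eps_gt0) // ler_pdivrMr ?mul1r ?lerDr // ltr_pwDl.
Qed.

Theorem theorem1 (R : realType) (d : nat) (hd : (1 <= d)%N)
  (B1 : nat -> nat -> R -> R) (B2 : 'I_d -> nat -> nat -> R -> R)
  (hB1 : forall k : nat, (1 <= k)%N -> basis_functions (B1 k))
  (hB2 : forall (j : 'I_d) (k : nat), (1 <= k)%N -> basis_functions (B2 j k))
  (g : R -> R) (hg01 : forall t, 0 <= g t <= 1)
  (hgnc : exists t1 t2, g t1 != g t2) (hglip : lipschitz g)
  (f : 'rV[R]_d -> R) (hf : {within unit_cube d, continuous f})
  (eps : R) (heps : 0 < eps) :
  exists p : nat, (1 <= p)%N /\
  exists (q1 : nat -> nat) (q2 : 'I_d -> nat -> nat),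
    (forall k, (1 <= k <= p)%N -> (1 <= q1 k)%N) /\
    (forall j k, (1 <= k <= p)%N -> (1 <= q2 j k)%N) /\
  exists (c1 : nat -> nat -> R) (c2 : 'I_d -> nat -> nat -> R)
         (bk : nat -> R) (b : R),
    sup_lt (unit_cube d)
      (fun x => f x -
        (\sum_(1 <= k < p.+1) \sum_(1 <= l < (q1 k).+1)
            c1 k l * B1 k l
              (g (\sum_(j < d) \sum_(1 <= r < (q2 j k).+1)
                     c2 j k r * B2 j k r (x ord0 j) + bk k))
         + b)) eps.
Proof.
have eps4_gt0 : 0 < eps / 4 by rewrite divr_gt0.
have [Lg Lg_gt0 gLg] := lipschitz_constant_gt0 hglip.
have [phi [K [phiK [p [p_gt0 [a [psi [beta [cpsi f_ridge]]]]]]]]] :=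
  continuous_ridge_approx hd (bounded_slope_continuous gLg) hgnc hf eps4_gt0.
have [q1 [q2 [q1_gt0 [q2_gt0 [c1 [c2 [bk [b ridge_basis]]]]]]]] :=
  basis_ridge_approx p a beta hB1 hB2 hg01 gLg phiK cpsi eps4_gt0.
exists p; split => //; exists q1, q2; split; first by move=> k /andP[/q1_gt0].
split; first by move=> j k /andP[/q2_gt0].
exists c1, c2, bk, b, (eps / 2) => [|x cx]; first lra.
apply: le_trans (ler_distD (\sum_(1 <= k < p.+1)
  a k * phi (g (\sum_(j < d) psi k j (x ord0 j) + beta))) _ _) _.
by have := f_ridge x cx; have := ridge_basis x cx; lra.
Qed.
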